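(* There exist an argumentation semantics $\sigma$ whose extensions are maximal conflict-free sets (w.r.t. set inclusion) and argumentation frameworks $AF=(AR,Attacks)$, $AF'=(AR',Attacks')$ with $AF\preceq_N AF'$ such that the following statement does NOT hold: if for every $E\in\sigma(AF)$ the implication $$\{(a,b)\in Attacks': a\in AR'\setminus AR,\ b\in E\}=\emptyset\ \Longrightarrow\ \forall E'\in\sigma(AF'),\ E\subseteq E'$$ holds, then for all $E\in\sigma(AF)$ and all $E'\in\sigma(AF')$ we have $E'\not\subseteq AR$ or $E'=E$.
   Context: An argumentation framework is a pair $(AR,Attacks)$ with $AR$ a finite set and $Attacks\subseteq AR\times AR$; $a$ attacks $b$ iff $(a,b)\in Attacks$. A set $S$ is conflict-free iff no element of $S$ attacks an element of $S$. An argumentation semantics $\sigma$ assigns to each argumentation framework a set $\sigma(AF)$ of subsets of $AR$; ''$\sigma$'s extensions are maximal conflict-free sets'' means that for every $AF$, every $E\in\sigma(AF)$ is a $\subseteq$-maximal conflict-free subset of the argument set of $AF$. $AF\preceq_N AF'$ (normal expansion) iff $AR\subseteq AR'$, $Attacks\subseteq Attacks'$ and no $(a,b)\in Attacks'\setminus Attacks$ has both $a,b\in AR$. *)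

From mathcomp Require Import all_boot.
From mathcomp Require Import finmap.
Set Implicit Arguments. Unset Strict Implicit. Unset Printing Implicit Defensive.
Local Open Scope fset_scope.

Record AF := mkAF {
  AR : {fset nat};
  Attacks : {fset nat * nat};
  Attacks_wf : forall p, p \in Attacks -> (p.1 \in AR) && (p.2 \in AR)
}.

Definition attacks (F : AF) (a b : nat) : bool := (a, b) \in Attacks F.

Definition conflict_free (F : AF) (S : {fset nat}) : Prop :=
  forall a b, a \in S -> b \in S -> ~~ attacks F a b.

Definition maximal_conflict_free (F : AF) (S : {fset nat}) : Prop :=
  S `<=` AR F /\ conflict_free F S /\
  (forall T : {fset nat}, T `<=` AR F -> conflict_free F T -> S `<=` T -> T = S).

Definition semantics := AF -> {fset nat} -> Prop.

Definition normal_expansion (F F' : AF) : Prop :=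
  AR F `<=` AR F' /\ Attacks F `<=` Attacks F' /\
  (forall p, p \in Attacks F' -> p \notin Attacks F ->
     ~ ((p.1 \in AR F) && (p.2 \in AR F))).

Definition new_attacks_on (F F' : AF) (E : {fset nat}) : {fset nat * nat} :=
  [fset p in Attacks F' | (p.1 \in AR F' `\` AR F) && (p.2 \in E)].

From mathcomp Require Import all_boot.
From mathcomp Require Import finmap.
Set Implicit Arguments. Unset Strict Implicit. Unset Printing Implicit Defensive.
Local Open Scope fset_scope.

(** Let [AF] be [1 -> 2] and let [AF'] add an argument [3] attacking both [1]
   and [2]. Both [{1}] and [{2}] are maximal conflict-free in [AF'], and the
   semantics may pick [{1}] on [AF] but [{2}] on [AF']. The hypothesis of the
   implication then holds vacuously, since the new argument [3] attacks the
   only extension [{1}] of [AF]; yet the extension [{2}] of [AF'] lies inside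
   the old arguments and differs from [{1}]. *)

Lemma restricted_attacks_wf (A : {fset nat}) (R : {fset nat * nat}) p :
  p \in [fset q in R | (q.1 \in A) && (q.2 \in A)] -> (p.1 \in A) && (p.2 \in A).
Proof. by rewrite inE => /andP[]. Qed.

Definition framework (A : {fset nat}) (R : {fset nat * nat}) : AF :=
  mkAF (@restricted_attacks_wf A R).

Lemma attacks_framework A R a b :
  attacks (framework A R) a b = [&& (a, b) \in R, a \in A & b \in A].
Proof. by rewrite /attacks inE. Qed.

Lemma singleton_maximal_conflict_free (F : AF) x :
  x \in AR F -> ~~ attacks F x x ->
  (forall y, y \in AR F -> y != x -> attacks F x y || attacks F y x) ->
  maximal_conflict_free F [fset x].
Proof.
move=> xF not_xx conflict; split; first by rewrite fsub1set.
split; first by move=> a b; rewrite !inE => /eqP-> /eqP->.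
move=> T /fsubsetP sub_TF cfT; rewrite fsub1set => xT.
apply/fsetP => y; rewrite inE; apply/idP/eqP => [yT|-> //].
apply/eqP; apply: contraT => y_neq_x.
case/orP: (conflict y (sub_TF y yT) y_neq_x) => attack.
- by move: (cfT _ _ xT yT); rewrite attack.
- by move: (cfT _ _ yT xT); rewrite attack.
Qed.

Lemma new_attacks_on_neq0 (F F' : AF) (E : {fset nat}) a b :
  attacks F' a b -> a \notin AR F -> b \in E -> new_attacks_on F F' E != fset0.
Proof.
move=> ab aF bE; apply/fset0Pn; exists (a, b).
by rewrite !inE /= (andP (Attacks_wf ab)).1 aF bE !andbT.
Qed.

(* [G] has no extension at all when [ext G] is not maximal conflict-free. *)
Definition selecting (ext : AF -> {fset nat}) : semantics :=
  fun G S => maximal_conflict_free G S /\ S = ext G.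

Lemma selectingP ext G S :
  maximal_conflict_free G (ext G) -> selecting ext G S <-> S = ext G.
Proof. by move=> mcf; split => [[] | ->]. Qed.

Definition old_framework : AF := framework [fset 1; 2] [fset (1, 2)].

Definition expanded_framework : AF :=
  framework [fset 1; 2; 3] [fset (1, 2); (3, 1); (3, 2)].

Lemma old_expanded_normal_expansion :
  normal_expansion old_framework expanded_framework.
Proof.
split; first by apply/fsubsetP => x; rewrite !inE => ->.
split; first by apply/fsubsetP => p; rewrite !inE => /andP[/eqP-> _].
by move=> p; rewrite !inE => /andP[/orP[/orP[]|] /eqP-> _].
Qed.

Definition pick_extension (G : AF) : {fset nat} :=
  if 3 \in AR G then [fset 2] else [fset 1].

Lemma old_extensions E :
  selecting pick_extension old_framework E <-> E = [fset 1].
Proof.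
have picked : pick_extension old_framework = [fset 1].
  by rewrite /pick_extension !inE.
rewrite -picked; apply: selectingP; rewrite picked.
apply: singleton_maximal_conflict_free => [||y]; rewrite ?attacks_framework !inE //.
by case/orP => /eqP->.
Qed.

Lemma expanded_extensions E :
  selecting pick_extension expanded_framework E <-> E = [fset 2].
Proof.
have picked : pick_extension expanded_framework = [fset 2].
  by rewrite /pick_extension !inE.
rewrite -picked; apply: selectingP; rewrite picked.
apply: singleton_maximal_conflict_free => [||y]; rewrite ?attacks_framework !inE //.
by case/orP => [/orP[]|] /eqP->.
Qed.

Theorem proposition53 :
  exists sigma : semantics,
    (forall (F : AF) (E : {fset nat}), sigma F E -> maximal_conflict_free F E) /\
    exists F F' : AF,
      normal_expansion F F' /\
      ~ ((forall E, sigma F E ->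
            new_attacks_on F F' E = fset0 ->
            forall E', sigma F' E' -> E `<=` E') ->
         forall E E', sigma F E -> sigma F' E' ->
            ~ (E' `<=` AR F) \/ E' = E).
Proof.
exists (selecting pick_extension); split; first by move=> F E [].
exists old_framework, expanded_framework.
split; first exact: old_expanded_normal_expansion.
have old_attacked E : selecting pick_extension old_framework E ->
    new_attacks_on old_framework expanded_framework E != fset0.
  move/old_extensions->; apply: (@new_attacks_on_neq0 _ _ _ 3 1);
    by rewrite ?attacks_framework !inE.
move/(_ (fun E sE new0 => False_ind _ (elimN eqP (old_attacked E sE) new0))).
move/(_ [fset 1] [fset 2]); rewrite old_extensions expanded_extensions.
case=> // [|/fsetP/(_ 2)]; last by rewrite !inE.
by case; rewrite fsub1set !inE.
Qed.
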